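(* Let $\mu\subsetneq\lambda$ be partitions. For every $T\in SP(\lambda,\mu)$, $\iota_{sp}(T)$ is a semistandard Young tableau on $\mathcal{A}_\infty$ which is $sp$-highest weight, and the map $\iota_{sp}$ restricted to $SP(\lambda,\mu)$ is injective.
   Context: Young diagrams in English convention (row 1 on top); $\ell(\lambda)$ is the number of nonzero parts of $\lambda$. Alphabet $\mathcal{A}_\infty=\{1<2<3<\cdots<\cdots<\bar 3<\bar 2<\bar 1\}$; entries $\bar i$ are called negative. Semistandard: rows weakly increase, columns strictly increase. The reading of a tableau reads each column top to bottom and concatenates columns from rightmost to leftmost; ''last'', ''before'', ''after'' refer to this order. Weight of $T$: $i$-th coordinate $\#\{i\}-\#\{\bar i\}$. For $n\ge1$, $\mathcal{A}_n=\{1<\dots<n<\bar n<\dots<\bar1\}$ with crystal $B_n$: $\tilde f_i(i)=i+1$, $\tilde f_i(\overline{i+1})=\bar i$ ($i<n$), $\tilde f_n(n)=\bar n$, $\tilde f_i(b)=0$ otherwise, $\tilde e_i$ the partial inverse; $\varepsilon_i,\varphi_i$ the maximal number of applications of $\tilde e_i$, resp. $\tilde f_i$, before reaching $0$; tensor rule $\tilde e_i(b_1\otimes b_2)=\tilde e_i(b_1)\otimes b_2$ if $\varphi_i(b_1)\ge\varepsilon_i(b_2)$, else $b_1\otimes\tilde e_i(b_2)$ (similarly $\tilde f_i(b_1\otimes b_2)=\tilde f_ib_1\otimes b_2$ if $\varphi_i(b_1)>\varepsilon_i(b_2)$, else $b_1\otimes\tilde f_ib_2$), iterated as $a_1\otimes\cdots\otimes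 a_N=(a_1\otimes\cdots\otimes a_{N-1})\otimes a_N$. A tableau $T$ on $\mathcal{A}_\infty$ is $sp$-highest weight if for every sufficiently large $n$ its reading $a_1\otimes\cdots\otimes a_N\in B_n^{\otimes N}$ satisfies $\tilde e_i(a_1\otimes\cdots\otimes a_N)=0$ for all $1\le i\le n$. $SP(\lambda,\mu)$ is the set of $sp$-highest weight semistandard Young tableaux of shape $\lambda$ on $\mathcal{A}_\infty$ with weight $\mu$. The map $\iota_{sp}$: given $T$, delete the last entry in the reading that is negative; then, if $\lambda_{\ell(\lambda)}>1$, slide the last row to the left as needed so that the result is a Young tableau. *)

(* Symplectic (type C) tableaux on the infinite alphabet
   A_oo = {1 < 2 < ... < ... < 2bar < 1bar}. *)
From HB Require Import structures.
From mathcomp Require Import all_boot all_order all_algebra.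
Set Implicit Arguments. Unset Strict Implicit. Unset Printing Implicit Defensive.
Import Order.TTheory GRing.Theory Num.Theory.

(* Letters: [Pos i] is the letter i, [Neg i] is the letter "i bar".
   Genuine letters of A_oo have index i >= 1 (see [on_Ainf]). *)
Inductive letter := Pos of nat | Neg of nat.

Definition letter_code (a : letter) : bool * nat :=
  match a with Pos i => (false, i) | Neg i => (true, i) end.
Definition letter_decode (c : bool * nat) : letter :=
  if c.1 then Neg c.2 else Pos c.2.
Lemma letter_codeK : cancel letter_code letter_decode.
Proof. by case. Qed.
HB.instance Definition _ := Equality.copy letter (can_type letter_codeK).

Definition lindex (a : letter) : nat := match a with Pos i => i | Neg i => i end.
Definition is_neg (a : letter) : bool := if a is Neg _ then true else false.

Definition lel (a b : letter) : bool :=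
  match a, b with
  | Pos i, Pos j => i <= j
  | Pos _, Neg _ => true
  | Neg _, Pos _ => false
  | Neg i, Neg j => j <= i
  end.
Definition ltl (a b : letter) : bool := lel a b && (a != b).

(* Tableaux: list of rows, row 1 first (English convention). *)
Definition tableau := seq (seq letter).
Definition shape (T : tableau) : seq nat := map size T.
Definition entry (T : tableau) (c : nat * nat) : letter :=
  nth (Pos 0) (nth [::] T c.1) c.2.

Definition is_partition (s : seq nat) : bool := sorted geq s && all (leq 1) s.

Definition rows_weak (T : tableau) : bool := all (sorted lel) T.
Definition cols_strict (T : tableau) : bool :=
  all (fun r => all (fun j => ltl (entry T (r, j)) (entry T (r.+1, j)))
                    (iota 0 (size (nth [::] T r.+1))))
      (iota 0 (size T)).
Definition ssyt (T : tableau) : bool :=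
  [&& is_partition (shape T), rows_weak T & cols_strict T].
Definition on_Ainf (T : tableau) : bool := all (fun a => 0 < lindex a) (flatten T).

Definition reading_cells (T : tableau) : seq (nat * nat) :=
  flatten [seq [seq (r, j) | r <- iota 0 (size T) & j < size (nth [::] T r)]
          | j <- rev (iota 0 (size (head [::] T)))].
Definition reading (T : tableau) : seq letter := map (entry T) (reading_cells T).

Definition wt (T : tableau) (i : nat) : int :=
  (Posz (count_mem (Pos i) (flatten T)) - Posz (count_mem (Neg i) (flatten T)))%R.
Definition has_weight (T : tableau) (mu : seq nat) : Prop :=
  forall i, 0 < i -> wt T i = Posz (nth 0 mu i.-1).

Definition f_l (i n : nat) (a : letter) : option letter :=
  if i < n then
    match a with
    | Pos j => if j == i then Some (Pos i.+1) else None
    | Neg j => if j == i.+1 then Some (Neg i) else None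
    end
  else if i == n then
    match a with Pos j => if j == n then Some (Neg n) else None | Neg _ => None end
  else None.
Definition e_l (i n : nat) (a : letter) : option letter :=
  if i < n then
    match a with
    | Pos j => if j == i.+1 then Some (Pos i) else None
    | Neg j => if j == i then Some (Neg i.+1) else None
    end
  else if i == n then
    match a with Neg j => if j == n then Some (Pos n) else None | Pos _ => None end
  else None.

Fixpoint napp (A : Type) (f : A -> option A) (k : nat) (x : A) : nat :=
  if k is k'.+1 then
    (if f x is Some y then (napp f k' y).+1 else 0)
  else 0.

(* epsilon_i of a single letter (it is at most 1) *)
Definition eps_l (i n : nat) (a : letter) : nat := napp (e_l i n) 2 a.

(* f_i on words a_1 (x) ... (x) a_N = (a_1 (x) ... (x) a_{N-1}) (x) a_N, by the
   tensor rule; [fuel] is a recursion bound (called with the word length).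
   phi_i of the prefix w' is the maximal number of applications of f_i on w',
   computed with bound size w' (phi_i of a word never exceeds its length). *)
Fixpoint ftil (i n fuel : nat) (w : seq letter) : option (seq letter) :=
  if fuel is fuel'.+1 then
    match rev w with
    | [::] => None
    | a :: rw' =>
      let w' := rev rw' in
      if eps_l i n a < napp (ftil i n fuel') (size w') w' then
        omap (fun v => rcons v a) (ftil i n fuel' w')
      else omap (fun b => rcons w' b) (f_l i n a)
    end
  else None.

Definition f_word (i n : nat) (w : seq letter) : option (seq letter) :=
  ftil i n (size w) w.
Definition phi_word (i n : nat) (w : seq letter) : nat :=
  napp (f_word i n) (size w) w.

Fixpoint etil_rev (i n : nat) (rw : seq letter) : option (seq letter) :=
  match rw with
  | [::] => None
  | a :: rw' =>
    if eps_l i n a <= phi_word i n (rev rw') then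
      omap (fun v => a :: v) (etil_rev i n rw')
    else omap (fun b => b :: rw') (e_l i n a)
  end.
Definition e_word (i n : nat) (w : seq letter) : option (seq letter) :=
  omap (@rev letter) (etil_rev i n (rev w)).

Definition sp_hw (T : tableau) : Prop :=
  exists N, forall n, N <= n -> forall i, 1 <= i <= n ->
    e_word i n (reading T) = None.

Definition inSP (lam mu : seq nat) (T : tableau) : Prop :=
  [/\ ssyt T, on_Ainf T, shape T = lam, sp_hw T & has_weight T mu].

Definition rem_at (A : Type) (j : nat) (s : seq A) : seq A := take j s ++ drop j.+1 s.

Definition delete_cell (T : tableau) (c : nat * nat) : tableau :=
  filter (fun row => size row != 0)
         (set_nth [::] T c.1 (rem_at c.2 (nth [::] T c.1))).

Definition iota_sp (T : tableau) : tableau :=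
  match [seq c <- reading_cells T | is_neg (entry T c)] with
  | [::] => T
  | c :: cs => delete_cell T (last c cs)
  end.

From Pilot Require Import Defs.
From mathcomp Require Import all_boot all_order all_algebra.
From mathcomp Require Import zify.
Set Implicit Arguments. Unset Strict Implicit. Unset Printing Implicit Defensive.

(* A tableau is sp-highest weight iff, for every i >= 1, its reading is an
   i-lattice word: every prefix has at least as many letters i, bar(i+1) (on
   which f_i acts) as letters i+1, bar(i) (on which e_i acts); for n beyond the
   entries of the tableau, e_n acts on no letter at all.  In a semistandard
   sp-highest weight tableau the unbarred entries of row r are all equal to r.
   The last barred entry of the reading is the bottom cell of the leftmost
   column containing a barred letter: everything to its left is unbarred and
   nothing lies below it.  Deleting it and sliding the rest of its row to the
   left keeps the tableau semistandard, and in the reading every barred entry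
   of that row moves past the column segment above it.  That segment reads
   1, 2, ..., k followed by barred letters smaller than the moving one, so it is
   itself i-lattice whenever the moving letter is bar(i+1): all lattice
   conditions survive.  Conversely, the shape tells which row lost a cell, the
   weight tells which barred letter was deleted, and a weakly increasing row is
   determined by its multiset of entries. *)

Lemma eqPos i j : (Pos i == Pos j) = (i == j).
Proof. by apply/eqP/eqP => [[]|->]. Qed.
Lemma eqNeg i j : (Neg i == Neg j) = (i == j).
Proof. by apply/eqP/eqP => [[]|->]. Qed.
Lemma eqPosNeg i j : (Pos i == Neg j) = false.
Proof. by apply/eqP. Qed.
Lemma eqNegPos i j : (Neg i == Pos j) = false.
Proof. by apply/eqP. Qed.
Definition letter_eqE := (eqPos, eqNeg, eqPosNeg, eqNegPos).

Lemma lel_refl : reflexive lel.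
Proof. by case=> j /=. Qed.
Lemma lel_trans : transitive lel.
Proof. by case=> [a|a] [b|b] [c|c] //=; lia. Qed.
Lemma lel_anti : antisymmetric lel.
Proof. by case=> [a|a] [b|b] //= /andP [h1 h2]; f_equal; lia. Qed.
Lemma ltlW a b : ltl a b -> lel a b.
Proof. by case/andP. Qed.
Lemma ltl_lel_trans a b c : ltl a b -> lel b c -> ltl a c.
Proof.
move=> /andP [ab nab] bc; rewrite /ltl (lel_trans ab bc); apply: contra nab => /eqP ac.
by rewrite -ac in bc; apply/eqP/lel_anti; rewrite ab bc.
Qed.
Lemma lel_ltl_trans a b c : lel a b -> ltl b c -> ltl a c.
Proof.
move=> ab /andP [bc nbc]; rewrite /ltl (lel_trans ab bc); apply: contra nbc => /eqP ac.
by rewrite ac in ab; apply/eqP/lel_anti; rewrite ab bc.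
Qed.
Lemma lel_neg a b : is_neg a -> lel a b -> is_neg b.
Proof. by case: a b => [a|a] [b|b]. Qed.
Lemma ltl_Pos p q : ltl (Pos p) (Pos q) = (p < q).
Proof. by rewrite /ltl /= eqPos ltn_neqAle andbC. Qed.

Lemma iota0_split a n : a < n -> iota 0 n = iota 0 a ++ a :: iota a.+1 (n - a.+1).
Proof.
move=> lt_an; have e : n = a + (n - a.+1).+1 by lia.
by rewrite {1}e iotaD.
Qed.

Lemma iota0S n : iota 0 n.+1 = rcons (iota 0 n) n.
Proof. by rewrite -addn1 iotaD cats1. Qed.

Lemma rev_iotaS m d : rev (iota m d.+1) = (m + d) :: rev (iota m d).
Proof. by rewrite -addn1 iotaD rev_cat. Qed.

Lemma filter_iota0_split (P : pred nat) N r : r < N -> P r -> (forall r', r' < r -> P r') ->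
  [seq x <- iota 0 N | P x] = iota 0 r ++ r :: [seq x <- iota r.+1 (N - r.+1) | P x].
Proof.
move=> rN Pr H; rewrite (iota0_split rN) filter_cat /= Pr; congr (_ ++ _).
by apply/all_filterP/allP => r'; rewrite mem_iota => /andP [_ /H].
Qed.

Lemma filter_iota0_prefix (P : pred nat) N h : h <= N -> (forall r, r < N -> P r = (r < h)) ->
  [seq x <- iota 0 N | P x] = iota 0 h.
Proof.
move=> hN HP; rewrite -[RHS](filter_iota_ltn 0 hN); apply: eq_in_filter => r.
by rewrite mem_iota => /andP [_ /HP].
Qed.

Lemma filter_iota0_downclosed (P : pred nat) N : (forall r, P r.+1 -> P r) ->
  exists2 h, [seq x <- iota 0 N | P x] = iota 0 h & forall r, r < h -> P r.
Proof.
move=> downP; elim: N => [|N [h filterE Ph]]; first by exists 0.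
rewrite iota0S filter_rcons; case PN: (P N); last by exists h.
have Plt r : r <= N -> P r.
  move=> /subnKC; move: (N - r) => k; elim: k r => [|k IH] r; first by rewrite addn0 => ->.
  by rewrite addnS -addSn => /IH /downP.
exists N.+1 => [|r]; last by rewrite ltnS => /Plt.
rewrite iota0S; congr rcons; apply/all_filterP/allP => r.
by rewrite mem_iota => /andP [_ /ltnW /Plt].
Qed.

Lemma count_rcons (T : Type) (p : pred T) s x : count p (rcons s x) = count p s + p x.
Proof. by rewrite -cats1 count_cat /= addn0. Qed.

Section RemAt.
Variable A : Type.
Implicit Type s : seq A.

Lemma size_rem_at j s : j < size s -> size (rem_at j s) = (size s).-1.
Proof. by move=> h; rewrite /rem_at size_cat size_take size_drop h; lia. Qed.

Lemma nth_rem_at (x0 : A) j s k : j < size s ->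
  nth x0 (rem_at j s) k = nth x0 s (if k < j then k else k.+1).
Proof.
move=> h; rewrite /rem_at nth_cat size_take h.
by case: ltnP => hk; [rewrite nth_take | rewrite nth_drop; congr nth; lia].
Qed.

Lemma rem_at_cons (x0 : A) j s : j < size s -> take j s ++ nth x0 s j :: drop j.+1 s = s.
Proof. by move=> h; rewrite -(drop_nth x0 h) cat_take_drop. Qed.

End RemAt.

Lemma rem_at_subseq (A : eqType) j (s : seq A) : subseq (rem_at j s) s.
Proof.
rewrite /rem_at -{3}(cat_take_drop j s); apply: cat_subseq => //.
by rewrite -[j.+1]/(1 + j) -drop_drop drop_subseq.
Qed.

Lemma perm_rem_at (A : eqType) x0 j (s : seq A) : j < size s ->
  perm_eq s (nth x0 s j :: rem_at j s).
Proof. by move=> h; rewrite -{1}(rem_at_cons x0 h) /rem_at -cat1s perm_catCA. Qed.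

(** * Lattice words *)

(* For [i < n], [f_i] acts exactly on the plus letters and [e_i] exactly on
   the minus letters of [B_n]. *)
Definition plus_letter (i : nat) (a : letter) : bool := (a == Pos i) || (a == Neg i.+1).
Definition minus_letter (i : nat) (a : letter) : bool := (a == Pos i.+1) || (a == Neg i).

Definition lattice (i : nat) (w : seq letter) : Prop :=
  forall k, count (minus_letter i) (take k w) <= count (plus_letter i) (take k w).

Lemma plus_letter_minus i a : plus_letter i a -> minus_letter i a = false.
Proof.
by case: a => j; rewrite /plus_letter /minus_letter !letter_eqE ?orbF /= => /eqP ->;
  apply/negbTE/eqP; lia.
Qed.

Lemma minus_letter_plus i a : minus_letter i a -> plus_letter i a = false.
Proof. by apply: contraTF => /plus_letter_minus ->. Qed.

Lemma lattice_count i w : lattice i w -> count (minus_letter i) w <= count (plus_letter i) w.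
Proof. by move=> /(_ (size w)); rewrite take_size. Qed.

Lemma lattice_catP i a s : lattice i (a ++ s) <->
  lattice i a /\ forall k, count (minus_letter i) a + count (minus_letter i) (take k s) <=
                           count (plus_letter i) a + count (plus_letter i) (take k s).
Proof.
split=> [L|[La Ls] k].
  split=> [k|k]; last by have := L (size a + k); rewrite take_cat ltnNge leq_addr addKn !count_cat.
  case: (leqP k (size a)) => ka; first by have := L k; rewrite takel_cat.
  by rewrite take_oversize ?(ltnW ka) //; have := L (size a); rewrite takel_cat // take_size.
by rewrite take_cat; case: ltnP => _; [apply: La | rewrite !count_cat].
Qed.

Lemma lattice_catl i a s : lattice i (a ++ s) -> lattice i a.
Proof. by case/lattice_catP. Qed.

Lemma lattice_cat i a s : lattice i a -> lattice i s -> lattice i (a ++ s).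
Proof.
move=> La Ls; apply/lattice_catP; split=> // k.
exact: leq_add (lattice_count La) (Ls k).
Qed.

Lemma lattice_rcons i w a : lattice i (rcons w a) <->
  lattice i w /\ count (minus_letter i) (rcons w a) <= count (plus_letter i) (rcons w a).
Proof.
rewrite -cats1; split=> [L|[Lw La]]; first by split; [apply: lattice_catl L | apply: lattice_count].
apply/lattice_catP; split=> // -[|k]; first by rewrite !addn0 lattice_count.
by move: La; rewrite !count_cat take_oversize.
Qed.

Lemma lattice_flatten i ws : (forall w, w \in ws -> lattice i w) -> lattice i (flatten ws).
Proof.
elim: ws => [_ k|w ws IH H] //=; apply: lattice_cat; first exact/H/mem_head.
by apply: IH => v vws; apply/H; rewrite inE vws orbT.
Qed.

Section LatticeMoves.
Variable i : nat.
Local Notation minus := (count (minus_letter i)).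
Local Notation plus := (count (plus_letter i)).

(* Moving [y] past [t] only removes [y] from the prefixes ending inside [t];
   when [y] is a plus letter, the lattice property of [t] makes up for it. *)
Lemma lattice_swap a y t c : lattice i (a ++ y :: t ++ c) -> (plus_letter i y -> lattice i t) ->
  lattice i (a ++ t ++ y :: c).
Proof.
move=> /lattice_catP [La L] Lt; apply/lattice_catP; split=> // k.
have drop_y s : (plus_letter i y -> minus s <= plus s) ->
    minus a + minus (y :: s) <= plus a + plus (y :: s) -> minus a + minus s <= plus a + plus s.
  have := lattice_count La; case P: (plus_letter i y) => /=.
    by rewrite (plus_letter_minus P) => + /(_ isT); lia.
  by case: (minus_letter i y) => /=; lia.
rewrite take_cat; case: ltnP => hk.
  by apply: drop_y; [move=> /Lt /(_ k) | have := L k.+1; rewrite /= take_cat hk].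
case E: (k - size t) => [|k'].
  rewrite take0 cats0; apply: drop_y; first by move=> /Lt /(_ (size t)); rewrite take_size.
  by have := L (size t).+1; rewrite /= take_cat ltnn subnn take0 cats0.
have := L k; have -> : k = (size t + k').+1 by lia.
by rewrite /= take_cat ltnNge leq_addr /= addKn !count_cat /=; lia.
Qed.

Lemma lattice_delete a y b : lattice i (a ++ y :: b) -> (plus_letter i y -> lattice i b) ->
  lattice i (a ++ b).
Proof.
move=> L Lb; have : lattice i ((a ++ b) ++ [:: y]).
  by rewrite -catA; apply: lattice_swap; rewrite ?cats0.
exact: lattice_catl.
Qed.

Definition blocks (ps : seq (seq letter * letter)) : seq letter :=
  flatten [seq rcons p.1 p.2 | p <- ps].

(* [slide y ps]: in [y :: blocks ps], each letter moves right past the next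
   block, and the last letter disappears. *)
Fixpoint slide (y : letter) (ps : seq (seq letter * letter)) : seq letter :=
  if ps is (t, x) :: ps' then t ++ y :: slide x ps' else [::].

Lemma lattice_slide ps a y b : lattice i (a ++ y :: blocks ps ++ b) ->
  (forall t z, (t, z) \in zip (unzip1 ps) (y :: unzip2 ps) -> plus_letter i z -> lattice i t) ->
  (plus_letter i (last y (unzip2 ps)) -> lattice i b) ->
  lattice i (a ++ slide y ps ++ b).
Proof.
elim: ps a y => [|[t x] ps IH] a y L Lblocks Lb /=; first exact: lattice_delete L Lb.
have -> : a ++ (t ++ y :: slide x ps) ++ b = (a ++ t ++ [:: y]) ++ slide x ps ++ b.
  by rewrite -!catA.
apply: IH => // [|t' z tz]; last by apply: Lblocks; rewrite inE tz orbT.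
rewrite -!catA /=; apply: lattice_swap; last by apply: Lblocks; rewrite mem_head.
by move: L; rewrite /blocks /= -cats1 -!catA.
Qed.

Lemma lattice_column (f : nat -> letter) h : 0 < i ->
  (forall r, r < h -> f r != Neg i) ->
  (forall r, r < h -> ~~ is_neg (f r) -> f r = Pos r.+1) ->
  (forall r, r.+1 < h -> ~~ is_neg (f r.+1) -> ~~ is_neg (f r)) ->
  lattice i (map f (iota 0 h)).
Proof.
move=> i0 noNeg PosE nonneg_up k; rewrite -map_take take_iota !count_map.
set h' := minn k h; have le_h' : h' <= h := geq_minr _ _.
have minus_at r : r < h' -> minus_letter i (f r) -> f r = Pos r.+1 /\ r = i.
  move=> rh'; have rh := leq_trans rh' le_h'.
  rewrite /minus_letter (negbTE (noNeg r rh)) orbF => /eqP fr.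
  by have := PosE r rh; rewrite fr => /(_ isT) [->].
have [/hasP [r rin /= mr]|] := boolP (has (preim f (minus_letter i)) (iota 0 h')); last first.
  by rewrite has_count -leqNgt leqn0 => /eqP ->.
move: rin; rewrite mem_iota add0n => /andP [_ rh']; have [fr ri] := minus_at r rh' mr; subst r.
have minus_le1 : count (preim f (minus_letter i)) (iota 0 h') <= 1.
  apply: leq_trans (_ : count (pred1 i) (iota 0 h') <= 1); last first.
    by rewrite count_uniq_mem ?iota_uniq //; case: (_ \in _).
  rewrite (@eq_in_count _ (preim f (minus_letter i)) (fun r => (r == i) && minus_letter i (f r))).
    by apply: sub_count => r /andP [].
  move=> r; rewrite mem_iota => /andP [_ lt_rh'] /=.
  by case M: (minus_letter i (f r)); rewrite ?andbF ?andbT // (minus_at r lt_rh' M).2 eqxx.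
have plus_pos : 0 < count (preim f (plus_letter i)) (iota 0 h').
  rewrite -has_count; apply/hasP; exists i.-1; first by rewrite mem_iota; lia.
  have nonneg : ~~ is_neg (f i.-1) by apply: nonneg_up; rewrite prednK ?fr //; lia.
  by rewrite /= PosE // ?prednK //; [rewrite /plus_letter eqxx | lia].
lia.
Qed.

End LatticeMoves.

(* For [i >= p] the lattice conditions compare only barred letters, which
   forces [#(Neg p) <= #(Neg (p + t))] for every [t], hence [#(Neg p) = 0];
   the condition for [i = p - 1] then fails at the final letter [Pos p]. *)
Lemma lattice_rcons_large_Pos Q p : 1 < p ->
  (forall x q, x \in Q -> p.-1 <= q -> x != Pos q) ->
  ~ (forall i, 0 < i -> lattice i (rcons Q (Pos p))).
Proof.
move=> p_gt1 noPos LQ.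
have barred i : p <= i -> count (minus_letter i) Q = count_mem (Neg i) Q /\
                           count (plus_letter i) Q = count_mem (Neg i.+1) Q.
  move=> pi; split; apply: eq_in_count => x xQ; rewrite /minus_letter /plus_letter /=;
    by rewrite (negbTE (noPos x _ xQ _)) //; lia.
have chain t : count_mem (Neg p) Q <= count_mem (Neg (p + t)) Q.
  elim: t => [|t IH]; first by rewrite addn0.
  have [minusE plusE] := barred (p + t) (leq_addr _ _).
  have [/lattice_count + _] := proj1 (lattice_rcons (p + t) Q (Pos p)) (LQ (p + t) ltac:(lia)).
  by rewrite minusE plusE addnS; apply: leq_trans.
set t := \max_(x <- Q) lindex x.
have no_Neg : count_mem (Neg (p + t)) Q = 0.
  apply/count_memPn/negP => /(@leq_bigmax_seq _ _ predT lindex) /(_ isT) h.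
  by have : p + t <= t := h; lia.
have := lattice_count (LQ p.-1 ltac:(lia)); rewrite !count_rcons.
have p1 : p.-1.+1 = p by lia.
rewrite /minus_letter /plus_letter p1 !letter_eqE eqxx /=.
have -> : count (fun x => (x == Pos p.-1) || (x == Neg p)) Q = 0.
  have := chain t; rewrite no_Neg leqn0 => /eqP NegP0.
  by rewrite -NegP0; apply: eq_in_count => x xQ; rewrite /= (negbTE (noPos x _ xQ (leqnn _))).
lia.
Qed.

(** * Highest weight words of the crystal [B_n] *)

Lemma napp_eq_min (A : Type) (f : A -> option A) (phi : A -> nat) (Q : A -> Prop) :
  (forall x, Q x -> if phi x is p.+1 then exists y, [/\ f x = Some y, phi y = p & Q y]
                    else f x = None) ->
  forall k x, Q x -> napp f k x = minn k (phi x).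
Proof.
move=> H; elim=> [|k IH] x Qx /=; first by rewrite min0n.
move: (H x Qx); case: (phi x) => [->|p [y [-> py Qy]]]; first by rewrite minn0.
by rewrite IH // py minnSS.
Qed.

(* [phi_i (w (x) a) = phi_i a + (phi_i w - eps_i a)], the subtraction being
   truncated, and at most one of [phi_i a], [eps_i a] is nonzero. *)
Definition phi_step (i p : nat) (a : letter) : nat :=
  if minus_letter i a then p.-1 else p + plus_letter i a.
Definition sig_phi (i : nat) (w : seq letter) : nat := foldl (phi_step i) 0 w.

Lemma sig_phi_rcons i w a : sig_phi i (rcons w a) = phi_step i (sig_phi i w) a.
Proof. by rewrite /sig_phi foldl_rcons. Qed.

Lemma sig_phi_le_size i w : sig_phi i w <= size w.
Proof.
elim/last_ind: w => [|w a IH] //; rewrite sig_phi_rcons size_rcons /phi_step.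
by case: (minus_letter i a); case: (plus_letter i a) => /=; lia.
Qed.

Lemma lattice_sig_phi i w :
  lattice i w -> sig_phi i w = count (plus_letter i) w - count (minus_letter i) w.
Proof.
elim/last_ind: w => [|w a IH] // /lattice_rcons [Lw La].
move: La (lattice_count Lw); rewrite sig_phi_rcons (IH Lw) /phi_step !count_rcons.
case P: (plus_letter i a); first rewrite (plus_letter_minus P) /=; first lia.
by case: (minus_letter i a) => /=; lia.
Qed.

Section Crystal.
Variables i n : nat.
Hypothesis lt_in : i < n.

Lemma eps_l_minus a : eps_l i n a = minus_letter i a.
Proof.
rewrite /eps_l /napp /e_l lt_in /minus_letter.
case: a => j; rewrite !letter_eqE ?orbF /=; case: ifP => // _; rewrite /= ?lt_in.
  by case: eqP => // e; lia.
by case: eqP => // e; lia.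
Qed.

Lemma f_l_plus a : plus_letter i a -> exists2 b, f_l i n a = Some b & minus_letter i b.
Proof.
rewrite /f_l lt_in /plus_letter /minus_letter.
case: a => j; rewrite !letter_eqE ?orbF /= => /eqP ->; rewrite eqxx.
  by exists (Pos i.+1); rewrite // eqPos eqxx.
by exists (Neg i); rewrite // eqNeg eqxx orbT.
Qed.

Lemma f_l_not_plus a : ~~ plus_letter i a -> f_l i n a = None.
Proof.
by rewrite /f_l lt_in /plus_letter; case: a => j; rewrite !letter_eqE ?orbF /= => /negbTE ->.
Qed.

Lemma e_l_minus a : minus_letter i a -> exists b, e_l i n a = Some b.
Proof.
rewrite /e_l lt_in /minus_letter.
by case: a => j; rewrite !letter_eqE ?orbF /= => /eqP ->; rewrite eqxx; eexists.
Qed.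

Lemma ftil_rcons fuel w a : ftil i n fuel.+1 (rcons w a) =
  if eps_l i n a < napp (ftil i n fuel) (size w) w
  then omap (rcons^~ a) (ftil i n fuel w) else omap (rcons w) (f_l i n a).
Proof. by rewrite /= rev_rcons revK. Qed.

Lemma ftil_sig_phi fuel w : size w <= fuel ->
  if sig_phi i w is p.+1
  then exists v, [/\ ftil i n fuel w = Some v, sig_phi i v = p & size v <= fuel]
  else ftil i n fuel w = None.
Proof.
elim: fuel w => [|fuel IH] w; first by rewrite leqn0 => /nilP ->.
case/lastP: w => [//|w a]; rewrite size_rcons ltnS => sw.
have napp_w : napp (ftil i n fuel) (size w) w = sig_phi i w.
  rewrite (@napp_eq_min _ _ (sig_phi i) (fun v => size v <= fuel)) //.
  exact/minn_idPr/sig_phi_le_size.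
rewrite ftil_rcons napp_w eps_l_minus sig_phi_rcons.
case: ltnP => [lt_eps|ge_eps].
  have [v [-> phiv sv]] : exists v, [/\ ftil i n fuel w = Some v,
      sig_phi i v = (sig_phi i w).-1 & size v <= fuel].
    by move: (IH w sw); case: (sig_phi i w) lt_eps => // p _ [v [? ? ?]]; exists v.
  have -> : phi_step i (sig_phi i w) a = (phi_step i (sig_phi i v) a).+1.
    rewrite phiv /phi_step; case: (minus_letter i a) lt_eps => /=;
      by case: (sig_phi i w) => [|[|p]].
  by exists (rcons v a); rewrite sig_phi_rcons size_rcons.
rewrite /phi_step.
case P: (plus_letter i a).
  have phiw0 : sig_phi i w = 0 by move: ge_eps; rewrite (plus_letter_minus P); lia.
  have [b -> mb] := f_l_plus P.
  rewrite (plus_letter_minus P) phiw0 /=.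
  by exists (rcons w b); rewrite sig_phi_rcons /phi_step mb phiw0 size_rcons.
rewrite f_l_not_plus ?P //= addn0.
by case: (minus_letter i a) ge_eps => /=; case: (sig_phi i w) => [|[]].
Qed.

Lemma phi_word_sig w : phi_word i n w = sig_phi i w.
Proof.
rewrite /phi_word /f_word (@napp_eq_min _ _ (sig_phi i) (fun => True)) //.
  exact/minn_idPr/sig_phi_le_size.
move=> v _; move: (ftil_sig_phi (leqnn (size v))).
by case: (sig_phi i v) => // p [u [? ? ?]]; exists u.
Qed.

Lemma e_word_rcons w a : e_word i n (rcons w a) =
  if eps_l i n a <= phi_word i n w then omap (rcons^~ a) (e_word i n w)
  else omap (rcons w) (e_l i n a).
Proof.
rewrite /e_word rev_rcons /= revK.
case: ifP => _; first by case: (etil_rev i n (rev w)) => //= v; rewrite rev_cons.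
by case: (e_l i n a) => //= b; rewrite rev_cons revK.
Qed.

Lemma e_word_lattice w : e_word i n w = None <-> lattice i w.
Proof.
elim/last_ind: w => [|w a IH]; first by split=> // _ k; rewrite take_nil.
rewrite e_word_rcons eps_l_minus phi_word_sig.
case: ifP => [le_eps|gt_eps].
  case Ew: (e_word i n w) => [v|] /=.
    by split=> // /lattice_rcons [/IH]; rewrite Ew.
  have Lw := proj1 IH Ew; split=> // _; apply/lattice_rcons; split=> //.
  move: le_eps (lattice_count Lw); rewrite (lattice_sig_phi Lw) !count_rcons.
  case P: (plus_letter i a); first rewrite (plus_letter_minus P) /=; first lia.
  by case: (minus_letter i a) => /=; lia.
case M: (minus_letter i a) gt_eps; last by case: (sig_phi i w).
move=> gt_eps; have [b ->] := e_l_minus M; split=> // /lattice_rcons [Lw La].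
move: gt_eps La (lattice_count Lw).
by rewrite (lattice_sig_phi Lw) !count_rcons M (minus_letter_plus M); lia.
Qed.

End Crystal.

Lemma e_word_eps0 i n w : (forall a, a \in w -> eps_l i n a = 0) -> e_word i n w = None.
Proof.
elim/last_ind: w => [|w a IH] // H.
rewrite e_word_rcons H ?mem_rcons ?mem_head // leq0n IH //.
by move=> b bw; apply: H; rewrite mem_rcons in_cons bw orbT.
Qed.

(* For [n] beyond every index occurring in [T], [e_n] acts on no letter of the
   reading, so only the [e_i] with [i < n] matter. *)
Lemma sp_hwP T : sp_hw T <-> forall i, 0 < i -> lattice i (reading T).
Proof.
split=> [[N HN] i i0|H].
  apply/(@e_word_lattice i (maxn N i.+1)); first by rewrite leq_maxr.
  by apply: HN; rewrite ?leq_maxl // i0 ltnW // leq_maxr.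
exists (\max_(a <- reading T) lindex a).+1 => m hm i /andP [i0 im].
case: (ltnP i m) => [lt_im|ge_im]; first exact/(e_word_lattice lt_im)/H.
have -> : i = m by apply/eqP; rewrite eqn_leq im.
apply: e_word_eps0 => a aw; have := @leq_bigmax_seq _ _ predT lindex _ aw isT.
rewrite /eps_l /napp /e_l ltnn eqxx; case: a aw => j //= _ le_j.
by case: eqP => // ej; lia.
Qed.

(** * Cells and the reading order *)

Definition read_before (c c' : nat * nat) : bool := (c'.2 < c.2) || (c.2 == c'.2) && (c.1 < c'.1).

Lemma read_before_asym c c' : read_before c c' -> ~~ read_before c' c.
Proof. by rewrite /read_before; case/orP => [|/andP [/eqP ->]]; lia. Qed.

Lemma read_before_irr c : read_before c c = false.
Proof. by apply/negP => bc; move: (read_before_asym bc); rewrite bc. Qed.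

(* A tableau is handled through its row function [R r = nth [::] T r], so that
   the tableau obtained by deleting a cell can be described row by row. *)
Section RowFunctions.
Variable R : nat -> seq letter.

Definition cell (c : nat * nat) : letter := nth (Pos 0) (R c.1) c.2.
Definition in_shape (c : nat * nat) : bool := c.2 < size (R c.1).
Definition column_cells (N j : nat) : seq (nat * nat) :=
  [seq (r, j) | r <- iota 0 N & j < size (R r)].
Definition cols_cells (N : nat) (js : seq nat) : seq (nat * nat) :=
  flatten [seq column_cells N j | j <- js].
Definition nonincreasing_rows : Prop := forall r r', r <= r' -> size (R r') <= size (R r).

Lemma cols_cells_cat N js1 js2 : cols_cells N (js1 ++ js2) = cols_cells N js1 ++ cols_cells N js2.
Proof. by rewrite /cols_cells map_cat flatten_cat. Qed.

Lemma cols_cells_iota_split N j M : j < M ->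
  cols_cells N (rev (iota 0 M)) =
  cols_cells N (rev (iota j.+1 (M - j.+1))) ++ column_cells N j ++ cols_cells N (rev (iota 0 j)).
Proof.
move=> jM; rewrite (iota0_split jM) rev_cat rev_cons -cats1 !cols_cells_cat -catA.
by rewrite /cols_cells /= cats0.
Qed.

Lemma cols_cells_iota3 N j0 L M : j0 <= L -> L <= M ->
  cols_cells N (rev (iota 0 M)) = cols_cells N (rev (iota L (M - L))) ++
    cols_cells N (rev (iota j0 (L - j0))) ++ cols_cells N (rev (iota 0 j0)).
Proof.
move=> h1 h2; have e : M = j0 + (L - j0) + (M - L) by lia.
by rewrite {1}e !iotaD !add0n (subnKC h1) !rev_cat !cols_cells_cat catA.
Qed.

Lemma column_cells_split N r j : nonincreasing_rows -> r < N -> j < size (R r) ->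
  column_cells N j = [seq (r', j) | r' <- iota 0 r] ++ (r, j) ::
                     [seq (r', j) | r' <- iota r.+1 (N - r.+1) & j < size (R r')].
Proof.
move=> decR rN jr; rewrite /column_cells (filter_iota0_split rN) ?map_cat //.
by move=> r' lt_r'r; apply: leq_trans jr (decR _ _ (ltnW lt_r'r)).
Qed.

Lemma column_cells_prefix N j h : h <= N -> (forall r, r < N -> (j < size (R r)) = (r < h)) ->
  column_cells N j = [seq (r, j) | r <- iota 0 h].
Proof. by move=> hN HP; rewrite /column_cells (filter_iota0_prefix hN HP). Qed.

Lemma column_cells_iota N j : nonincreasing_rows ->
  exists2 h, column_cells N j = [seq (r, j) | r <- iota 0 h] & forall r, r < h -> j < size (R r).
Proof.
move=> decR; have [h filterE Ph] := @filter_iota0_downclosed (fun r => j < size (R r)) N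
  (fun r hr => leq_trans hr (decR _ _ (leqnSn r))).
by exists h; rewrite // /column_cells filterE.
Qed.

Lemma mem_cols_cells N js c : c \in cols_cells N js -> [/\ in_shape c, c.2 \in js & c.1 < N].
Proof.
move=> /flattenP [cs /mapP [j jin ->]] /mapP [r].
by rewrite mem_filter mem_iota => /andP [jr /andP [_ rN]] ->.
Qed.

Lemma cols_cells_rows_nil N N' js : (forall r, N <= r -> R r = [::]) -> N <= N' ->
  cols_cells N' js = cols_cells N js.
Proof.
move=> HR NN; congr flatten; apply: eq_map => j.
rewrite /column_cells -(subnKC NN) iotaD filter_cat add0n.
rewrite [filter _ (iota N _)](_ : _ = [::]) ?cats0 //; apply/eqP.
by rewrite -(negbK (_ == _)) -has_filter; apply/hasPn => r; rewrite mem_iota => /andP [/HR ->].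
Qed.

Lemma cols_cells_cols_nil N m M : (forall r, size (R r) <= m) -> m <= M ->
  cols_cells N (rev (iota 0 M)) = cols_cells N (rev (iota 0 m)).
Proof.
move=> Rm mM; rewrite -(subnKC mM) iotaD rev_cat cols_cells_cat add0n.
have col_nil j : j \in rev (iota m (M - m)) -> column_cells N j = [::].
  rewrite mem_rev mem_iota => /andP [mj _]; apply/nilP; rewrite /nilp size_map size_filter.
  by rewrite eqn0Ngt -has_count; apply/hasPn => r _; rewrite -leqNgt (leq_trans (Rm r)).
rewrite /cols_cells; elim: (rev _) col_nil => // j js IH col_nil /=.
by rewrite col_nil ?mem_head // IH // => j' j'js; apply: col_nil; rewrite inE j'js orbT.
Qed.

Lemma map_cols_cells N js :
  map cell (cols_cells N js) = flatten [seq map cell (column_cells N j) | j <- js].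
Proof. by rewrite map_flatten -map_comp. Qed.

End RowFunctions.

Lemma eq_cols_cells R R' N js : R =1 R' -> cols_cells R N js = cols_cells R' N js.
Proof.
move=> eqR; congr flatten; apply: eq_map => j.
by rewrite /column_cells (eq_filter (a2 := fun r => j < size (R' r))) // => r; rewrite eqR.
Qed.

Lemma column_word_eq R R' N j : (forall r, (j < size (R' r)) = (j < size (R r))) ->
  (forall r, j < size (R r) -> cell R' (r, j) = cell R (r, j)) ->
  map (cell R') (column_cells R' N j) = map (cell R) (column_cells R N j).
Proof.
move=> size_eq cell_eq; rewrite /column_cells (eq_filter size_eq) -!map_comp.
by apply/eq_in_map => r; rewrite mem_filter => /andP [/cell_eq].
Qed.

Lemma row_lt_size (T : tableau) r j : j < size (nth [::] T r) -> r < size T.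
Proof. by case: (ltnP r (size T)) => // hh; rewrite nth_default. Qed.

Lemma mem_cell T c : in_shape (nth [::] T) c -> cell (nth [::] T) c \in flatten T.
Proof.
move=> h; apply/flattenP; exists (nth [::] T c.1); last exact: mem_nth.
exact/mem_nth/(row_lt_size h).
Qed.

Lemma mem_reading_cells T c : c \in reading_cells T -> in_shape (nth [::] T) c.
Proof. by case/mem_cols_cells. Qed.

Section Semistandard.
Variable T : tableau.
Hypothesis ssT : ssyt T.
Local Notation R := (nth [::] T).

Lemma ssyt_nonincreasing_rows : nonincreasing_rows R.
Proof.
move=> r r' rr'; case/and3P: ssT => /andP [sorted_sh _] _ _.
case: (ltnP r' (size T)) => h; last by rewrite nth_default.
have geq_trans : transitive geq by move=> a b c /= h1 h2; apply: leq_trans h2 h1.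
move: (sorted_leq_nth geq_trans (fun x => leqnn x) 0 sorted_sh) => /(_ r r').
rewrite !inE !size_map !(nth_map [::]) //; last exact: leq_ltn_trans h.
by apply; rewrite ?(leq_ltn_trans rr' h).
Qed.

Lemma ssyt_row_nonempty r : r < size T -> 0 < size (R r).
Proof.
case/and3P: ssT => /andP [_ /allP pos] _ _ h.
by apply: pos; rewrite -(nth_map [::] 0) // mem_nth ?size_map.
Qed.

Lemma ssyt_row_sorted r : sorted lel (R r).
Proof.
case/and3P: ssT => _ /allP rows _.
by case: (ltnP r (size T)) => h; [apply/rows/mem_nth | rewrite nth_default].
Qed.

Lemma ssyt_row_le r j j' : j <= j' -> j' < size (R r) -> lel (cell R (r, j)) (cell R (r, j')).
Proof.
move=> jj' h; move: (sorted_leq_nth lel_trans lel_refl (Pos 0) (ssyt_row_sorted r)).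
by apply; rewrite ?inE // (leq_ltn_trans jj').
Qed.

Lemma ssyt_colS_lt r j : j < size (R r.+1) -> ltl (cell R (r, j)) (cell R (r.+1, j)).
Proof.
move=> h; case/and3P: ssT => _ _ /allP cols.
have rT : r \in iota 0 (size T) by rewrite mem_iota add0n (ltnW (row_lt_size h)).
by have /allP := cols r rT; apply; rewrite mem_iota.
Qed.

Lemma ssyt_col_lt r r' j : r < r' -> j < size (R r') -> ltl (cell R (r, j)) (cell R (r', j)).
Proof.
elim: r' => [|r' IH] //; rewrite ltnS leq_eqVlt => /orP [/eqP <-|lt_rr'] hj.
  exact: ssyt_colS_lt.
apply: ltl_lel_trans (IH lt_rr' _) (ltlW (ssyt_colS_lt hj)).
exact: leq_trans hj (ssyt_nonincreasing_rows (leqnSn _)).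
Qed.

Lemma ssyt_col_le r r' j : r <= r' -> j < size (R r') -> lel (cell R (r, j)) (cell R (r', j)).
Proof.
rewrite leq_eqVlt => /orP [/eqP <-|lt_rr'] hj; first exact: lel_refl.
exact/ltlW/ssyt_col_lt.
Qed.

Lemma ssyt_row_le_head r : size (R r) <= size (head [::] T).
Proof. by rewrite -nth0; apply: ssyt_nonincreasing_rows. Qed.

Lemma ssyt_reading_cells N M : size T <= N -> size (head [::] T) <= M ->
  reading_cells T = cols_cells R N (rev (iota 0 M)).
Proof.
move=> hN hM; rewrite /reading_cells -/(cols_cells R _ _).
rewrite -(cols_cells_cols_nil _ ssyt_row_le_head hM).
by rewrite (cols_cells_rows_nil _ _ hN) // => r h; rewrite nth_default.
Qed.

Lemma reading_cells_complete c : in_shape R c -> c \in reading_cells T.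
Proof.
case: c => r j; rewrite /in_shape /= => hj; rewrite /reading_cells.
apply/flattenP; exists (column_cells R (size T) j).
  by apply/mapP; exists j; rewrite // mem_rev mem_iota (leq_trans hj) ?ssyt_row_le_head.
by apply/mapP; exists r; rewrite // mem_filter hj mem_iota (row_lt_size hj).
Qed.

Lemma reading_cells_split r j : j < size (R r) -> exists P S,
  [/\ reading_cells T = P ++ (r, j) :: S,
      forall c, c \in P -> in_shape R c && read_before c (r, j),
      forall c, c \in S -> in_shape R c && read_before (r, j) c
    & forall c, in_shape R c -> read_before (r, j) c -> c \in S].
Proof.
move=> hj; set m := size (head [::] T); have jm : j < m by apply: leq_trans hj (ssyt_row_le_head r).
set P := cols_cells R (size T) (rev (iota j.+1 (m - j.+1))) ++ [seq (r', j) | r' <- iota 0 r].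
set S := [seq (r', j) | r' <- iota r.+1 (size T - r.+1) & j < size (R r')] ++
         cols_cells R (size T) (rev (iota 0 j)).
have readE : reading_cells T = P ++ (r, j) :: S.
  rewrite (ssyt_reading_cells (leqnn _) (leqnn m)) (cols_cells_iota_split _ _ jm).
  by rewrite (column_cells_split ssyt_nonincreasing_rows (row_lt_size hj) hj) -!catA.
have Pbefore c : c \in P -> in_shape R c && read_before c (r, j).
  rewrite mem_cat => /orP [/mem_cols_cells [-> + _]|/mapP [r' + ->]].
    by rewrite mem_rev mem_iota /read_before => /andP [-> _].
  rewrite mem_iota /read_before /in_shape => /andP [_ lt_r'r] /=.
  by rewrite eqxx lt_r'r orbT (leq_trans hj) ?ssyt_nonincreasing_rows ?(ltnW lt_r'r).
exists P, S; split=> // [c|c /reading_cells_complete + after].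
  rewrite mem_cat => /orP [/mapP [r']|/mem_cols_cells [-> + _]].
    by rewrite mem_filter mem_iota /read_before /in_shape => /andP [jr' /andP [lt_rr' _]] ->;
      rewrite /= jr' eqxx lt_rr' orbT.
  by rewrite mem_rev mem_iota /read_before => /andP [_ ->].
rewrite readE mem_cat in_cons => /or3P [/Pbefore /andP [_]|/eqP ec|//].
  by move/read_before_asym; rewrite after.
by move: after (read_before_asym after); rewrite ec => ->.
Qed.

End Semistandard.

(** * Unbarred entries of highest weight tableaux *)

Section HighestWeightTableau.
Variable T : tableau.
Hypotheses (ssT : ssyt T) (AT : on_Ainf T) (latT : forall i, 0 < i -> lattice i (reading T)).
Local Notation R := (nth [::] T).

Lemma Pos_cell_of_earlier r j p : j < size (R r) -> cell R (r, j) = Pos p ->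
  (forall c, in_shape R c -> read_before c (r, j) -> ~~ is_neg (cell R c) ->
     cell R c = Pos c.1.+1) ->
  p = r.+1.
Proof.
move=> hj Erj earlier.
have lt_rp : r < p.
  case: r hj Erj earlier => [|r] hj Erj earlier.
    by have := allP AT _ (@mem_cell T (0, j) hj); rewrite Erj.
  have lt_col := ssyt_colS_lt ssT hj; rewrite Erj in lt_col.
  have Erj' : cell R (r, j) = Pos r.+1.
    apply: earlier; rewrite /in_shape /read_before /= ?eqxx ?ltnSn ?orbT //.
      exact: leq_trans hj (ssyt_nonincreasing_rows ssT (leqnSn r)).
    by case: (cell R (r, j)) lt_col.
  by rewrite Erj' ltl_Pos in lt_col.
apply/eqP; rewrite eqn_leq lt_rp andbT leqNgt; apply/negP => lt_rp1.
have [P [S [readT Pearlier _ _]]] := reading_cells_split ssT hj.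
apply: (@lattice_rcons_large_Pos (map (cell R) P) p); first lia.
  move=> _ q /mapP [[r' j'] /Pearlier /andP [hj' ear] ->] le_pq; apply/eqP => Eq.
  have Er'j' : cell R (r', j') = Pos r'.+1 by apply: earlier; rewrite // Eq.
  have le_rr' : r <= r' by move: Er'j'; rewrite Eq => -[]; lia.
  case/orP: ear => /= [lt_jj'|/andP [_]]; last lia.
  have hjr : j' < size (R r) by apply: leq_trans hj' (ssyt_nonincreasing_rows ssT le_rr').
  have Erj' : cell R (r, j') = Pos r.+1.
    apply: earlier; rewrite /read_before ?lt_jj' //.
    by have := ssyt_col_le ssT le_rr' hj'; rewrite Er'j'; case: (cell R (r, j')).
  by have := ssyt_row_le ssT (ltnW lt_jj') hjr; rewrite Erj Erj' /=; lia.
have readT' : reading T = rcons (map (cell R) P) (Pos p) ++ map (cell R) S.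
  by rewrite /reading readT map_cat -Erj cat_rcons.
by move=> i /latT; rewrite readT'; apply: lattice_catl.
Qed.

Lemma ssyt_lattice_Pos_cell r j : j < size (R r) -> ~~ is_neg (cell R (r, j)) ->
  cell R (r, j) = Pos r.+1.
Proof.
set m := size (head [::] T); move: r; have [d le_d] : exists d, m - j <= d by exists (m - j).
elim: d j le_d => [|d IHd] j hd.
  by move=> r h; have := ssyt_row_le_head ssT r; lia.
elim/ltn_ind => r IHr hj; case Erj: (cell R (r, j)) => [p|//] _.
rewrite (Pos_cell_of_earlier hj Erj) // => -[r' j']; rewrite /in_shape /read_before /=.
move=> hj' /orP [lt_jj'|/andP [/eqP ej' lt_r'r]]; last by subst j'; apply: IHr.
by apply: (IHd j') => //; have := ssyt_row_le_head ssT r'; rewrite -/m; lia.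
Qed.

End HighestWeightTableau.

(** * The last barred cell of the reading *)

Definition removable_cell (T : tableau) (r0 j0 : nat) : Prop :=
  [/\ j0 < size (nth [::] T r0), is_neg (cell (nth [::] T) (r0, j0)),
      forall r, r0 < r -> size (nth [::] T r) <= j0
    & forall r j, j < j0 -> j < size (nth [::] T r) -> ~~ is_neg (cell (nth [::] T) (r, j))].

Section LastNegative.
Variable T : tableau.
Hypothesis ssT : ssyt T.
Local Notation R := (nth [::] T).

Lemma last_neg_cell c0 cs r0 j0 :
  [seq c <- reading_cells T | is_neg (entry T c)] = c0 :: cs -> last c0 cs = (r0, j0) ->
  removable_cell T r0 j0.
Proof.
move=> negs last_c.
have : (r0, j0) \in [seq c <- reading_cells T | is_neg (entry T c)].
  by rewrite negs -last_c mem_last.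
rewrite mem_filter => /andP [negc hj0].
have {}hj0 := mem_reading_cells hj0.
have [P [S [readE _ Safter Sall]]] := reading_cells_split ssT hj0.
have Snonneg c : c \in S -> ~~ is_neg (cell R c).
  move=> cS; apply/negP => negc'.
  have : last c0 cs = last (r0, j0) [seq c <- S | is_neg (entry T c)].
    by rewrite -[last c0 cs]/(last (r0, j0) (c0 :: cs)) -negs readE filter_cat /= negc last_cat.
  case E: [seq c <- S | is_neg (entry T c)] => [|d ds] /=.
    by have : c \in [::] by rewrite -E mem_filter negc'.
  rewrite last_c => last_d; have := mem_last d ds.
  rewrite -last_d -E mem_filter => /andP [_ /Safter].
  by rewrite read_before_irr andbF.
have after_nonneg c : in_shape R c -> read_before (r0, j0) c -> ~~ is_neg (cell R c).
  by move=> hc /(Sall _ hc) /Snonneg.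
split=> // [r|r j lt_jj0 hj]; last by apply: after_nonneg; rewrite // /read_before /= lt_jj0.
have below1 : size (R r0.+1) <= j0.
  rewrite leqNgt; apply/negP => hj1.
  have := after_nonneg (r0.+1, j0) hj1; rewrite /read_before /= eqxx ltnSn orbT => /(_ isT).
  by rewrite (lel_neg negc (ltlW (ssyt_colS_lt ssT hj1))).
by move=> lt_r0r; apply: leq_trans (ssyt_nonincreasing_rows ssT lt_r0r) below1.
Qed.

End LastNegative.

(** * Deleting a cell *)

Section DeleteCell.
Variable T : tableau.
Hypothesis ssT : ssyt T.
Variables r0 j0 : nat.
Local Notation R := (nth [::] T).
Hypothesis hj0 : j0 < size (R r0).
Hypothesis below : forall r, r0 < r -> size (R r) <= j0.

Definition del_rows (r : nat) : seq letter := if r == r0 then rem_at j0 (R r0) else R r.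
Local Notation T' := (delete_cell T (r0, j0)).

Lemma r0_lt_size : r0 < size T.
Proof. exact: row_lt_size hj0. Qed.

Lemma del_rows_r0 : del_rows r0 = rem_at j0 (R r0).
Proof. by rewrite /del_rows eqxx. Qed.

Lemma del_rows_neq r : r != r0 -> del_rows r = R r.
Proof. by rewrite /del_rows => /negbTE ->. Qed.

Lemma size_del_rows_r0 : size (del_rows r0) = (size (R r0)).-1.
Proof. by rewrite del_rows_r0 size_rem_at. Qed.

(* Only row [r0] can become empty, and then it is the last row. *)
Lemma nth_delete_cell r : nth [::] T' r = del_rows r.
Proof.
have nonempty s : {subset s <= T} -> [seq row <- s | size row != 0] = s.
  move=> sT; apply/all_filterP/allP => x /sT /(nthP [::]) [k kT <-].
  by rewrite -lt0n; apply: ssyt_row_nonempty.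
rewrite /delete_cell /= set_nthE r0_lt_size filter_cat /=.
rewrite (nonempty (take r0 T)) => [|x /mem_take //].
rewrite (nonempty (drop r0.+1 T)) => [|x /mem_drop //].
rewrite /del_rows; case: ifP => hne.
  have := set_nthE T [::] r0 (rem_at j0 (R r0)); rewrite r0_lt_size => <-.
  by rewrite nth_set_nth /=; case: eqP.
have j00 : j0 = 0 by move/negbFE/eqP: hne; rewrite size_rem_at //; lia.
have sizeT : size T = r0.+1.
  apply/eqP; rewrite eqn_leq r0_lt_size andbT leqNgt; apply/negP => h.
  by have := ssyt_row_nonempty ssT h; have := below (ltnSn r0); lia.
rewrite drop_oversize ?sizeT // cats0.
case: ltngtP => h; first by rewrite nth_take.
  by rewrite !nth_default ?size_take ?r0_lt_size ?sizeT //; lia.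
by move/negbFE: hne; rewrite size_eq0 => /eqP ->; rewrite h nth_default // size_take r0_lt_size.
Qed.

Lemma size_delete_cell : size T' <= size T.
Proof.
rewrite /delete_cell size_filter; apply: leq_trans (count_size _ _) _.
by rewrite size_set_nth geq_max r0_lt_size leqnn.
Qed.

Lemma del_rows_nonincreasing : nonincreasing_rows del_rows.
Proof.
move=> r r' rr'; rewrite /del_rows.
case: (eqVneq r' r0) => [er'|ne']; case: (eqVneq r r0) => [er|ne] //.
- by rewrite size_rem_at // -er'; have := ssyt_nonincreasing_rows ssT rr'; lia.
- have lt_r0r' : r0 < r' by rewrite ltn_neqAle eq_sym ne' -er.
  by rewrite size_rem_at //; have := below lt_r0r'; lia.
- exact: ssyt_nonincreasing_rows.
Qed.

Lemma delete_cell_shape : is_partition (shape T').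
Proof.
apply/andP; split.
  apply/(sortedP 0) => k; rewrite size_map => h.
  by rewrite /shape !(nth_map [::]) ?nth_delete_cell //; [apply: del_rows_nonincreasing | lia].
by apply/allP => x /mapP [row]; rewrite mem_filter lt0n => /andP [h _] ->.
Qed.

Lemma delete_cell_rows : rows_weak T'.
Proof.
apply/(all_nthP [::]) => k _; rewrite nth_delete_cell /del_rows.
case: ifP => _; last exact: ssyt_row_sorted ssT k.
exact: (subseq_sorted lel_trans (rem_at_subseq _ _) (ssyt_row_sorted ssT r0)).
Qed.

Lemma delete_cell_cols : cols_strict T'.
Proof.
apply/allP => r _; apply/allP => j; rewrite mem_iota add0n nth_delete_cell => /andP [_ hj].
rewrite /entry /= !nth_delete_cell /del_rows in hj *.
case: (eqVneq r.+1 r0) => [e1|ne1].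
  rewrite (_ : r == r0 = false); last by apply/eqP; lia.
  rewrite e1 eqxx size_rem_at // in hj *; rewrite nth_rem_at //.
  set j' := if j < j0 then j else j.+1.
  have hj' : j' < size (R r0) by rewrite /j'; case: ifP; lia.
  have hj'r : j' < size (R r) by apply: leq_trans hj' (ssyt_nonincreasing_rows ssT _); lia.
  apply: lel_ltl_trans (ssyt_row_le ssT (_ : j <= j') hj'r) _; first by rewrite /j'; case: ifP.
  by rewrite -e1; apply: (ssyt_colS_lt ssT); rewrite e1.
rewrite (negbTE ne1) in hj *.
case: (eqVneq r r0) => [er|_]; last exact: ssyt_colS_lt ssT _ _ hj.
subst r; rewrite nth_rem_at // (_ : j < j0); last by have := below (ltnSn r0); lia.
exact: ssyt_colS_lt.
Qed.

Lemma ssyt_delete_cell : ssyt T'.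
Proof. by rewrite /ssyt delete_cell_shape delete_cell_rows delete_cell_cols. Qed.

Lemma count_delete_cell (p : pred letter) :
  count p (flatten T') + p (cell R (r0, j0)) = count p (flatten T).
Proof.
have count_nonempty s : count p (flatten [seq row <- s | size row != 0]) = count p (flatten s).
  by elim: s => [|a s IH] //=; case: ifP => /=; rewrite !count_cat IH // => /negbFE/nilP ->.
rewrite /delete_cell /= count_nonempty set_nthE r0_lt_size.
rewrite -[in RHS](rem_at_cons [::] r0_lt_size) -[in RHS](rem_at_cons (Pos 0) hj0).
by rewrite !flatten_cat /= !count_cat /cell /=; lia.
Qed.

Lemma mem_delete_cell x : x \in flatten T' -> x \in flatten T.
Proof.
rewrite -!has_pred1 !has_count -(count_delete_cell (pred1 x)).
by move=> /leq_trans; apply; rewrite leq_addr.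
Qed.

End DeleteCell.

(** * The reading after deletion *)

Section DeletedReading.
Variable T : tableau.
Hypotheses (ssT : ssyt T) (AT : on_Ainf T) (latT : forall i, 0 < i -> lattice i (reading T)).
Variables r0 j0 : nat.
Local Notation R := (nth [::] T).
Local Notation R' := (del_rows T r0 j0).
Local Notation L := (size (nth [::] T r0)).
Local Notation N := (size T).
Hypotheses (hj0 : j0 < L) (negc : is_neg (cell R (r0, j0))).
Hypothesis below : forall r, r0 < r -> size (R r) <= j0.
Hypothesis leftpos : forall r j, j < j0 -> j < size (R r) -> ~~ is_neg (cell R (r, j)).

Definition column_top (j : nat) : seq letter := [seq cell R (r, j) | r <- iota 0 r0].

Lemma cell_del_rows_neq r j : r != r0 -> cell R' (r, j) = cell R (r, j).
Proof. by move=> ne; rewrite /cell /= del_rows_neq. Qed.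

Lemma column_band j : j0 <= j < L ->
  map (cell R) (column_cells R N j) = rcons (column_top j) (cell R (r0, j)).
Proof.
case/andP=> le_j0j lt_jL; rewrite (@column_cells_prefix _ _ _ r0.+1) ?(r0_lt_size hj0) //.
  by rewrite iota0S !map_rcons -map_comp.
move=> r _; case: (leqP r r0) => [le_rr0|lt_r0r].
  by rewrite ltnS le_rr0 (leq_trans lt_jL) ?ssyt_nonincreasing_rows.
by rewrite ltnS (leqNgt r r0) lt_r0r ltnNge (leq_trans (below lt_r0r)).
Qed.

Lemma column_band_del j : j0 <= j -> j.+1 < L ->
  map (cell R') (column_cells R' N j) = rcons (column_top j) (cell R (r0, j.+1)).
Proof.
move=> le_j0j lt_jL; rewrite (@column_cells_prefix _ _ _ r0.+1) ?(r0_lt_size hj0) //.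
  rewrite iota0S !map_rcons -map_comp /= /cell /= del_rows_r0 nth_rem_at // ltnNge le_j0j.
  congr rcons; apply/eq_in_map => r; rewrite mem_iota => /andP [_ lt_rr0].
  by rewrite /= del_rows_neq // ltn_eqF.
move=> r _; case: (eqVneq r r0) => [->|ne]; first by rewrite size_del_rows_r0 // ltnSn; lia.
rewrite del_rows_neq //; case: (leqP r r0) => [le_rr0|lt_r0r].
  by rewrite ltnS le_rr0 (leq_trans (_ : j < L)) ?ssyt_nonincreasing_rows //; lia.
by rewrite ltnS (leqNgt r r0) lt_r0r ltnNge (leq_trans (below lt_r0r)).
Qed.

Lemma column_last_del : map (cell R') (column_cells R' N L.-1) = column_top L.-1.
Proof.
rewrite (@column_cells_prefix _ _ _ r0) ?(ltnW (r0_lt_size hj0)) //.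
  by rewrite -map_comp; apply/eq_in_map => r; rewrite mem_iota => /andP [_ /ltn_eqF ne] /=;
    rewrite /cell /= del_rows_neq ?ne.
move=> r _; case: (eqVneq r r0) => [->|ne]; first by rewrite size_del_rows_r0 // ltnn ltnn.
rewrite del_rows_neq //; case: (ltnP r r0) => [lt_rr0|le_r0r].
  by rewrite (leq_trans (_ : L.-1 < L)) ?ssyt_nonincreasing_rows ?(ltnW lt_rr0) //; lia.
have lt_r0r : r0 < r by rewrite ltn_neqAle eq_sym ne le_r0r.
by apply/negbTE; rewrite -leqNgt (leq_trans (below lt_r0r)) //; lia.
Qed.

Lemma column_outside_del j : (j < j0) || (L <= j) ->
  map (cell R') (column_cells R' N j) = map (cell R) (column_cells R N j).
Proof.
move=> outj; apply: column_word_eq => r; case: (eqVneq r r0) => [->|ne].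
- by rewrite size_del_rows_r0 //; apply/idP/idP; lia.
- by rewrite del_rows_neq.
- move=> hj; rewrite /cell /= del_rows_r0 nth_rem_at //.
  by case/orP: outj => [->|le_Lj] //; lia.
- by move=> _; rewrite cell_del_rows_neq.
Qed.

(* Columns [j0 + d - 1], ..., [j0] of [T] in reading order, each split into its
   part above row [r0] and its entry in row [r0]. *)
Definition band (d : nat) : seq (seq letter * letter) :=
  [seq (column_top j, cell R (r0, j)) | j <- rev (iota j0 d)].

Lemma bandS d : band d.+1 = (column_top (j0 + d), cell R (r0, j0 + d)) :: band d.
Proof. by rewrite /band rev_iotaS. Qed.

Lemma read_band d : j0 + d <= L ->
  map (cell R) (cols_cells R N (rev (iota j0 d))) = blocks (band d).
Proof.
elim: d => [|d IH] // le_dL; rewrite /band rev_iotaS /= map_cat IH; last lia.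
by rewrite column_band //; lia.
Qed.

Lemma read_band_del d : j0 + d < L ->
  map (cell R') (cols_cells R' N (rev (iota j0 d))) = slide (cell R (r0, j0 + d)) (band d).
Proof.
elim: d => [|d IH] // lt_dL; rewrite /band rev_iotaS /= map_cat IH; last lia.
by rewrite column_band_del ?leq_addr -?cats1 -?catA ?addnS //; lia.
Qed.

Lemma zip_band d : zip (unzip1 (band d)) (cell R (r0, j0 + d) :: unzip2 (band d)) =
  [seq (column_top j, cell R (r0, j.+1)) | j <- rev (iota j0 d)].
Proof. by elim: d => [|d IH] //; rewrite bandS [in RHS]rev_iotaS map_cons -IH addnS. Qed.

(* Above a barred letter [Neg i.+1] of row [r0] there is no [Neg i], and the
   unbarred letters of a column are [Pos 1], [Pos 2], ... from the top. *)
Lemma lattice_column_top i j : 0 < i -> j0 <= j -> j.+1 < L ->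
  plus_letter i (cell R (r0, j.+1)) -> lattice i (column_top j).
Proof.
move=> i0 le_j0j lt_jL plus_x.
have neg_x : is_neg (cell R (r0, j.+1)) by apply: lel_neg negc (ssyt_row_le ssT _ lt_jL); lia.
have x_eq : cell R (r0, j.+1) = Neg i.+1.
  move: plus_x neg_x; case: (cell R (r0, j.+1)) => k //=.
  by rewrite /plus_letter !letter_eqE /= => /eqP ->.
have hjr r : r < r0 -> j < size (R r).
  by move=> /ltnW /(ssyt_nonincreasing_rows ssT); apply: leq_trans; lia.
apply: lattice_column => // r lt_rr0.
- have := ltl_lel_trans (ssyt_col_lt ssT lt_rr0 (ltnW lt_jL)) (ssyt_row_le ssT (leqnSn j) lt_jL).
  by rewrite x_eq; apply: contraTneq => ->; rewrite /ltl /= ltnn.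
- exact: ssyt_lattice_Pos_cell (hjr r lt_rr0).
- by apply: contraNN => neg_r; apply: lel_neg neg_r (ssyt_col_le ssT (leqnSn r) (hjr _ lt_rr0)).
Qed.

Lemma lattice_left_cols i : 0 < i -> lattice i (map (cell R) (cols_cells R N (rev (iota 0 j0)))).
Proof.
move=> i0; rewrite map_cols_cells; apply: lattice_flatten => w /mapP [j + ->].
rewrite mem_rev mem_iota => /andP [_ lt_jj0].
have [h -> hr] := column_cells_iota N j (ssyt_nonincreasing_rows ssT).
have PosE r : r < h -> cell R (r, j) = Pos r.+1.
  by move=> rh; apply: ssyt_lattice_Pos_cell (hr r rh) (leftpos lt_jj0 (hr r rh)).
rewrite -map_comp; apply: lattice_column => // r rh.
- by rewrite /= PosE.
- by move=> _; apply: PosE.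
- by move=> _; apply: leftpos lt_jj0 (hr r (ltnW rh)).
Qed.

Lemma read_cols_outside_del js : (forall j, j \in js -> (j < j0) || (L <= j)) ->
  map (cell R') (cols_cells R' N js) = map (cell R) (cols_cells R N js).
Proof.
move=> outjs; rewrite !map_cols_cells; congr flatten.
by apply/eq_in_map => j /outjs; apply: column_outside_del.
Qed.

Lemma reading_delete_cell : reading (delete_cell T (r0, j0)) =
  map (cell R') (cols_cells R' N (rev (iota 0 (size (head [::] T))))).
Proof.
have head_del : size (head [::] (delete_cell T (r0, j0))) <= size (head [::] T).
  rewrite -nth0 nth_delete_cell // /del_rows; case: ifP => _; last exact: ssyt_row_le_head.
  by rewrite size_rem_at //; apply: leq_trans (leq_pred _) (ssyt_row_le_head ssT _).
have ssT' := ssyt_delete_cell ssT hj0 below.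
rewrite /reading (ssyt_reading_cells ssT' (size_delete_cell hj0) head_del).
rewrite (eq_cols_cells _ _ (nth_delete_cell ssT hj0 below)).
by apply: eq_map => c; rewrite /entry /cell nth_delete_cell.
Qed.

Lemma read_band_all :
  map (cell R) (cols_cells R N (rev (iota j0 (L - j0)))) =
  rcons (column_top L.-1) (cell R (r0, L.-1)) ++ blocks (band (L.-1 - j0)).
Proof.
have eLd : L - j0 = (L.-1 - j0).+1 by lia.
have ej0d : j0 + (L.-1 - j0) = L.-1 by lia.
by rewrite eLd read_band; [rewrite bandS ej0d | lia].
Qed.

Lemma read_band_all_del :
  map (cell R') (cols_cells R' N (rev (iota j0 (L - j0)))) =
  column_top L.-1 ++ slide (cell R (r0, L.-1)) (band (L.-1 - j0)).
Proof.
have eLd : L - j0 = (L.-1 - j0).+1 by lia.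
have ej0d : j0 + (L.-1 - j0) = L.-1 by lia.
rewrite eLd rev_iotaS ej0d [cols_cells _ _ _]/= map_cat column_last_del read_band_del ?ej0d //.
lia.
Qed.

Lemma lattice_reading_delete_cell i : 0 < i -> lattice i (reading (delete_cell T (r0, j0))).
Proof.
move=> i0; have := latT i0; set m := size (head [::] T).
have le_Lm : L <= m by apply: ssyt_row_le_head.
have outA j : j \in rev (iota L (m - L)) -> (j < j0) || (L <= j).
  by rewrite mem_rev mem_iota => /andP [-> _]; rewrite orbT.
have outB j : j \in rev (iota 0 j0) -> (j < j0) || (L <= j).
  by rewrite mem_rev mem_iota => /andP [_ ->].
rewrite /reading (ssyt_reading_cells ssT (leqnn _) (leqnn m)) -/(reading _) reading_delete_cell.
rewrite !(cols_cells_iota3 _ _ (ltnW hj0) le_Lm) !map_cat read_band_all read_band_all_del.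
rewrite (read_cols_outside_del outA) (read_cols_outside_del outB) -cats1 -!catA cat1s => readT.
rewrite catA; apply: lattice_slide => [|t z|_]; [by rewrite -catA | | exact: lattice_left_cols].
have ej0d : j0 + (L.-1 - j0) = L.-1 by lia.
rewrite -[in cell _ _]ej0d zip_band => /mapP [j].
rewrite mem_rev mem_iota => /andP [le_j0j lt_jd] [-> ->].
by apply: lattice_column_top; lia.
Qed.

End DeletedReading.

Lemma iota_spP T : ssyt T ->
  iota_sp T = T \/ exists r0 j0, iota_sp T = delete_cell T (r0, j0) /\ removable_cell T r0 j0.
Proof.
move=> ssT; rewrite /iota_sp; case negs: [seq c <- _ | _] => [|c0 cs]; first by left.
right; case E: (last c0 cs) => [r0 j0]; exists r0, j0; split=> //.
exact: last_neg_cell negs E.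
Qed.

Lemma iota_sp_ssyt_hw T : ssyt T -> on_Ainf T -> sp_hw T ->
  [/\ ssyt (iota_sp T), on_Ainf (iota_sp T) & sp_hw (iota_sp T)].
Proof.
move=> ssT AT /sp_hwP latT.
case: (iota_spP ssT) => [->|[r0 [j0 [-> [hj0 negc below leftpos]]]]].
  by split=> //; apply/sp_hwP.
split; first exact: ssyt_delete_cell.
  by apply/allP => x /(mem_delete_cell ssT hj0) /(allP AT).
by apply/sp_hwP => i; apply: lattice_reading_delete_cell.
Qed.

Lemma size_flatten_delete_cell T r0 j0 : ssyt T -> j0 < size (nth [::] T r0) ->
  (size (flatten (delete_cell T (r0, j0)))).+1 = size (flatten T).
Proof. by move=> ssT hj0; have := count_delete_cell ssT hj0 predT; rewrite !count_predT addn1. Qed.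

Section Injectivity.
Variables T1 T2 : tableau.
Hypotheses (ssT1 : ssyt T1) (ssT2 : ssyt T2) (shapeE : shape T1 = shape T2).
Local Notation R1 := (nth [::] T1).
Local Notation R2 := (nth [::] T2).

Lemma size_rows_eq r : size (R1 r) = size (R2 r).
Proof.
have nth_shape T : nth 0 (shape T) r = size (nth [::] T r).
  by case: (ltnP r (size T)) => h; [rewrite (nth_map [::]) | rewrite !nth_default ?size_map].
by rewrite -!nth_shape shapeE.
Qed.

Lemma delete_cell_same_row r1 j1 r2 j2 : removable_cell T1 r1 j1 -> removable_cell T2 r2 j2 ->
  delete_cell T1 (r1, j1) = delete_cell T2 (r2, j2) -> r1 = r2.
Proof.
move=> [hj1 _ below1 _] [hj2 _ below2 _] delE.
have := congr1 (fun T => size (nth [::] T r1)) delE.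
rewrite /= (nth_delete_cell ssT1 hj1 below1) (nth_delete_cell ssT2 hj2 below2).
rewrite del_rows_r0 /del_rows size_rem_at //; case: eqP => [//|_]; rewrite -size_rows_eq; lia.
Qed.

Lemma delete_cell_inj r j1 j2 : removable_cell T1 r j1 -> removable_cell T2 r j2 ->
  cell R1 (r, j1) = cell R2 (r, j2) -> delete_cell T1 (r, j1) = delete_cell T2 (r, j2) -> T1 = T2.
Proof.
move=> [hj1 _ below1 _] [hj2 _ below2 _] xE delE.
have rowsE r' : del_rows T1 r j1 r' = del_rows T2 r j2 r'.
  by rewrite -(nth_delete_cell ssT1 hj1 below1) -(nth_delete_cell ssT2 hj2 below2) delE.
have row_r : R1 r = R2 r.
  apply: (sorted_eq lel_trans lel_anti); rewrite ?ssyt_row_sorted //.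
  apply: perm_trans (perm_rem_at (Pos 0) hj1) _; rewrite perm_sym.
  apply: perm_trans (perm_rem_at (Pos 0) hj2) _.
  by have := rowsE r; rewrite !del_rows_r0 => ->; rewrite -[nth _ _ j1]/(cell R1 (r, j1)) xE.
apply: (@eq_from_nth _ [::]) => [|r' _]; first by have := congr1 size shapeE; rewrite !size_map.
by case: (eqVneq r' r) => [->|ne] //; have := rowsE r'; rewrite !del_rows_neq.
Qed.

Lemma delete_cell_same_letter r j1 j2 : on_Ainf T1 ->
  (forall i, 0 < i -> wt T1 i = wt T2 i) -> removable_cell T1 r j1 -> removable_cell T2 r j2 ->
  delete_cell T1 (r, j1) = delete_cell T2 (r, j2) -> cell R1 (r, j1) = cell R2 (r, j2).
Proof.
move=> AT1 wtE [hj1 neg1 _ _] [hj2 neg2 _ _] delE.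
have count1 := count_delete_cell ssT1 hj1; have count2 := count_delete_cell ssT2 hj2.
case E1: (cell R1 (r, j1)) neg1 => [//|k] _; case E2: (cell R2 (r, j2)) neg2 => [//|k2] _.
have k_pos : 0 < k by have := allP AT1 _ (@mem_cell T1 (r, j1) hj1); rewrite E1.
have PosE : count_mem (Pos k) (flatten T1) = count_mem (Pos k) (flatten T2).
  by rewrite -(count1 (pred1 (Pos k))) -(count2 (pred1 (Pos k))) E1 E2 delE.
have NegE : count_mem (Neg k) (flatten T1) = count_mem (Neg k) (flatten T2).
  by have := wtE k k_pos; rewrite /wt PosE; lia.
move: NegE; rewrite -(count1 (pred1 (Neg k))) -(count2 (pred1 (Neg k))) E1 E2 delE /= eqxx.
by rewrite eqNeg => /addnI; case: eqP => [->|].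
Qed.

End Injectivity.

Lemma iota_sp_inj T1 T2 : ssyt T1 -> ssyt T2 -> on_Ainf T1 -> shape T1 = shape T2 ->
  (forall i, 0 < i -> wt T1 i = wt T2 i) -> iota_sp T1 = iota_sp T2 -> T1 = T2.
Proof.
move=> ssT1 ssT2 AT1 shapeE wtE.
have sizeE : size (flatten T1) = size (flatten T2) by rewrite !size_flatten shapeE.
case: (iota_spP ssT1) => [->|[r1 [j1 [-> rem1]]]];
  case: (iota_spP ssT2) => [->|[r2 [j2 [-> rem2]]]] // delE.
- by case: rem2 => hj2 _ _ _; have := size_flatten_delete_cell ssT2 hj2; rewrite -delE; lia.
- by case: rem1 => hj1 _ _ _; have := size_flatten_delete_cell ssT1 hj1; rewrite delE; lia.
have er := delete_cell_same_row ssT1 ssT2 shapeE rem1 rem2 delE; subst r2.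
apply: (delete_cell_inj ssT1 ssT2 shapeE rem1 rem2 _ delE).
exact (delete_cell_same_letter ssT1 ssT2 AT1 wtE rem1 rem2 delE).
Qed.

Theorem lemma4p4 (lam mu : seq nat) :
  is_partition lam -> is_partition mu ->
  (forall k, nth 0 mu k <= nth 0 lam k) -> mu != lam ->
  (forall T, inSP lam mu T ->
     [/\ ssyt (iota_sp T), on_Ainf (iota_sp T) & sp_hw (iota_sp T)]) /\
  (forall T1 T2, inSP lam mu T1 -> inSP lam mu T2 ->
     iota_sp T1 = iota_sp T2 -> T1 = T2).
Proof.
move=> _ _ _ _; split=> [T [ssT AT _ hwT _]|T1 T2 [ssT1 AT1 sh1 _ wt1] [ssT2 _ sh2 _ wt2]].
  exact: iota_sp_ssyt_hw.
apply: iota_sp_inj => // [|i i0]; first by move: sh1 sh2; rewrite /Defs.shape /shape => -> ->.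
by rewrite wt1 ?wt2.
Qed.
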